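(* Let $p$ be a NetKAT program in which every occurrence of $\mathsf{dup}$ carries a distinct positive label, and let $A(p)=(S,s_0,\epsilon,\delta)$ be its program automaton. For all packets $pk_{in},pk_1,\dots,pk_n,pk_{out}$ ($n\ge 0$), with $h=pk_{out}::pk_n::\cdots::\langle pk_1\rangle$ (so $h=\langle pk_{out}\rangle$ when $n=0$), we have $h\in[\![p]\!]\langle pk_{in}\rangle$ if and only if $\mathrm{accept}\ s_0\ (pk_{in}\cdot pk_1\cdot\mathsf{dup}\cdots pk_n\cdot\mathsf{dup}\cdot pk_{out})$.
   Context: NetKAT. Fix finitely many fields $f$ with natural-number values. A packet $pk$ assigns a value $pk.f$ to each field; $pk[f:=n]$ is the update. A history is a nonempty list of packets, written $pk::h$ or $\langle pk\rangle$. Predicates: $a ::= 1 \mid 0 \mid f=n \mid a+b \mid a\cdot b \mid \neg a$. Programs: $p ::= a \mid f\leftarrow n \mid p+q \mid p\cdot q \mid p^* \mid \mathsf{dup}^\ell$ with labels $\ell$. Semantics: $[\![1]\!]h=\{h\}$; $[\![0]\!]h=\emptyset$; $[\![f=n]\!](pk::h)=\{pk::h\}$ if $pk.f=n$, else $\emptyset$; $[\![\neg a]\!]h=\{h\}\setminus[\![a]\!]h$; $[\![f\leftarrow n]\!](pk::h)=\{pk[f:=n]::h\}$; $[\![p+q]\!]h=[\![p]\!]h\cup[\![q]\!]h$; $[\![p\cdot q]\!]h=\bigcup_{h'\in[\![p]\!]h}[\![q]\!]h'$; $[\![p^*]\!]h=\bigcup_iF^ih$ with $F^0h=\{h\}$,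 $F^{i+1}h=\bigcup_{h'\in[\![p]\!]h}F^ih'$; $[\![\mathsf{dup}^\ell]\!](pk::h)=\{pk::pk::h\}$. $\mathcal{E}$ and $\mathcal{D}$: $\mathcal{E}(a)=a$, $\mathcal{D}(a)=\emptyset$; $\mathcal{E}(f\leftarrow n)=f\leftarrow n$, $\mathcal{D}(f\leftarrow n)=\emptyset$; $\mathcal{E}(\mathsf{dup}^\ell)=0$, $\mathcal{D}(\mathsf{dup}^\ell)=\{(1,\ell,1)\}$; $\mathcal{E}(q+r)=\mathcal{E}(q)+\mathcal{E}(r)$, $\mathcal{D}(q+r)=\mathcal{D}(q)\cup\mathcal{D}(r)$; $\mathcal{E}(q\cdot r)=\mathcal{E}(q)\cdot\mathcal{E}(r)$, $\mathcal{D}(q\cdot r)=\{(d,\ell,k\cdot r)\mid(d,\ell,k)\in\mathcal{D}(q)\}\cup\{(\mathcal{E}(q)\cdot d,\ell,k)\mid(d,\ell,k)\in\mathcal{D}(r)\}$; $\mathcal{E}(q^* )=\mathcal{E}(q)^*$, $\mathcal{D}(q^* )=\{(\mathcal{E}(q)^*\cdot d,\ell,k\cdot q^* )\mid(d,\ell,k)\in\mathcal{D}(q)\}$. For each label $\ell$ occurring in $p$ there is exactly one triple $(d,\ell,k)\in\mathcal{D}(p)$; write $k_\ell$ for its $k$ (the continuation of $\mathsf{dup}^\ell$), and set $k_0=p$. NetKAT automaton: a tuple $(S,s_0,\epsilon,\delta)$ with $S$ finite, $s_0\in S$, $\epsilon:S\to\mathrm{Pk}\to\mathcal{P}(\mathrm{Pk})$,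 $\delta:S\to\mathrm{Pk}\to\mathcal{P}(\mathrm{Pk}\times S)$. Its inputs are strings $pk_{in}\cdot pk_1\cdot\mathsf{dup}\cdots pk_n\cdot\mathsf{dup}\cdot pk_{out}$; acceptance: $\mathrm{accept}\ s\ (pk_{in}\cdot pk_{out})\iff pk_{out}\in\epsilon\,s\,pk_{in}$, and $\mathrm{accept}\ s\ (pk_{in}\cdot pk_1\cdot\mathsf{dup}\cdot w)\iff$ there is $(pk_1,s')\in\delta\,s\,pk_{in}$ with $\mathrm{accept}\ s'\ (pk_1\cdot w)$. Program automaton $A(p)$: $S$ is the set of labels occurring in $p$ together with $0$; $s_0=0$; $\epsilon\,\ell\,pk=\{pk'\mid\langle pk'\rangle\in[\![\mathcal{E}(k_\ell)]\!]\langle pk\rangle\}$; $\delta\,\ell\,pk=\{(pk',\ell')\mid(d,\ell',k)\in\mathcal{D}(k_\ell),\ \langle pk'\rangle\in[\![d]\!]\langle pk\rangle\}$. *)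

From mathcomp Require Import all_boot.
Set Implicit Arguments. Unset Strict Implicit. Unset Printing Implicit Defensive.

Section NetKAT.
Variable Fld : finType.

Definition packet := Fld -> nat.
Definition upd (pk : packet) (f : Fld) (n : nat) : packet :=
  fun g => if g == f then n else pk g.

(* A history is a nonempty list of packets: (pk, h) stands for pk :: h,
   and (pk, [::]) for <pk>. *)
Definition history := (packet * seq packet)%type.

Inductive test : Type :=
| TOne | TZero | TEq of Fld & nat | TPlus of test & test | TSeq of test & test
| TNeg of test.

Inductive prog : Type :=
| PTest of test
| PAssign of Fld & nat
| PPlus of prog & prog
| PSeq of prog & prog
| PStar of prog
| PDup of nat.

(* semantics, sets represented as predicates: sem p h h' means h' ∈ [[p]] h *)
Fixpoint tsem (a : test) (h h' : history) : Prop :=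
  match a with
  | TOne => h' = h
  | TZero => False
  | TEq f n => h' = h /\ (h.1 f = n)
  | TPlus a b => tsem a h h' \/ tsem b h h'
  | TSeq a b => exists h'', tsem a h h'' /\ tsem b h'' h'
  | TNeg a => h' = h /\ ~ tsem a h h
  end.

Fixpoint pow (R : history -> history -> Prop) (i : nat) (h h' : history) : Prop :=
  match i with
  | 0 => h' = h
  | i.+1 => exists h'', R h h'' /\ pow R i h'' h'
  end.

Fixpoint sem (p : prog) (h h' : history) : Prop :=
  match p with
  | PTest a => tsem a h h'
  | PAssign f n => h' = (upd h.1 f n, h.2)
  | PPlus p q => sem p h h' \/ sem q h h'
  | PSeq p q => exists h'', sem p h h'' /\ sem q h'' h'
  | PStar p => exists i, pow (sem p) i h h'
  | PDup _ => h' = (h.1, h.1 :: h.2)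
  end.

Fixpoint E (p : prog) : prog :=
  match p with
  | PTest a => PTest a
  | PAssign f n => PAssign f n
  | PPlus q r => PPlus (E q) (E r)
  | PSeq q r => PSeq (E q) (E r)
  | PStar q => PStar (E q)
  | PDup _ => PTest TZero
  end.

Fixpoint D (p : prog) : seq (prog * nat * prog) :=
  match p with
  | PTest _ => [::]
  | PAssign _ _ => [::]
  | PDup l => [:: (PTest TOne, l, PTest TOne)]
  | PPlus q r => D q ++ D r
  | PSeq q r => [seq (t.1.1, t.1.2, PSeq t.2 r) | t <- D q]
                ++ [seq (PSeq (E q) t.1.1, t.1.2, t.2) | t <- D r]
  | PStar q => [seq (PSeq (PStar (E q)) t.1.1, t.1.2, PSeq t.2 (PStar q)) | t <- D q]
  end.

Fixpoint labels (p : prog) : seq nat :=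
  match p with
  | PTest _ | PAssign _ _ => [::]
  | PDup l => [:: l]
  | PPlus q r | PSeq q r => labels q ++ labels r
  | PStar q => labels q
  end.

Definition well_labelled (p : prog) : bool :=
  uniq (labels p) && all (fun l => 0 < l) (labels p).

(* k_l : the continuation of dup^l (the k of the triple (d,l,k) in D(p)), k_0 = p *)
Definition kont (p : prog) (l : nat) : prog :=
  if l == 0 then p else
  match [seq t.2 | t <- D p & t.1.2 == l] with
  | k :: _ => k
  | [::] => p
  end.

(* membership of a triple in a list (programs have no decidable equality) *)
Fixpoint inT (x : prog * nat * prog) (s : seq (prog * nat * prog)) : Prop :=
  match s with [::] => False | y :: s' => y = x \/ inT x s' end.

(* NetKAT automata; epsilon s pk pk' means pk' ∈ ε s pk,
   delta s pk pk' s' means (pk', s') ∈ δ s pk *)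
Record nka := NKA {
  nka_state : finType;
  nka_s0 : nka_state;
  nka_eps : nka_state -> packet -> packet -> Prop;
  nka_delta : nka_state -> packet -> packet -> nka_state -> Prop }.

(* accept s (pk_in . pk_1 . dup ... pk_n . dup . pk_out), the string given by
   pk_in, the list [:: pk_1; ...; pk_n], and pk_out *)
Fixpoint accept (A : nka) (s : nka_state A) (pkin : packet) (w : seq packet)
    (pkout : packet) : Prop :=
  match w with
  | [::] => nka_eps s pkin pkout
  | pk1 :: w' => exists s', nka_delta s pkin pk1 s' /\ accept s' pk1 w' pkout
  end.

Definition pa_state (p : prog) : finType := seq_sub (0 :: labels p).

Definition pa_s0 (p : prog) : pa_state p := SeqSub (mem_head 0 (labels p)).

Definition pa_eps (p : prog) (s : pa_state p) (pk pk' : packet) : Prop :=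
  sem (E (kont p (ssval s))) (pk, [::]) (pk', [::]).

Definition pa_delta (p : prog) (s : pa_state p) (pk pk' : packet)
    (s' : pa_state p) : Prop :=
  exists d k, inT (d, ssval s', k) (D (kont p (ssval s))) /\
              sem d (pk, [::]) (pk', [::]).

Definition prog_automaton (p : prog) : nka :=
  @NKA (pa_state p) (pa_s0 p) (@pa_eps p) (@pa_delta p).

End NetKAT.

(* A run of p either performs no dup, and is then a run of E(p), or splits at
   its first dup, say dup^l, into a dup-free run of some d and a run of the
   continuation k, where (d, l, k) is in D(p): p = E(p) + sum of d.dup.k.
   The semantics only pushes packets onto the history and never reads it back,
   so a history with n dups can be consumed one packet at a time.  Derivatives
   of a continuation k_l are again derivatives of p with the same label and
   continuation, and distinct positive labels make the continuation of each
   label unique and keep it apart from the initial state 0, so every step of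
   such a decomposition is a transition of A(p); induction on n concludes. *)

From mathcomp Require Import all_boot.
From Stdlib Require Import Setoid.
Set Implicit Arguments. Unset Strict Implicit. Unset Printing Implicit Defensive.

Section ProgramAutomaton.
Variable Fld : finType.
Local Notation prog := (prog Fld).
Local Notation history := (history Fld).
Local Notation packet := (packet Fld).

Fixpoint tholds (a : test Fld) (pk : packet) : Prop :=
  match a with
  | TOne => True | TZero => False | TEq f n => pk f = n
  | TPlus a b => tholds a pk \/ tholds b pk
  | TSeq a b => tholds a pk /\ tholds b pk
  | TNeg a => ~ tholds a pk
  end.

Lemma tsemE a (x y : history) : tsem a x y <-> y = x /\ tholds a x.1.
Proof.
elim: a x y => [||f n|a IHa b IHb|a IHa b IHb|a IHa] x y /=.
- by split=> [->|[]].
- by split=> [|[]].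
- by [].
- rewrite IHa IHb; tauto.
- split=> [[h [/IHa [-> Ha] /IHb [-> Hb]]]|[-> [Ha Hb]]]; first by [].
  by exists x; rewrite IHa IHb.
- have := IHa x x; tauto.
Qed.

Lemma pow_add (R : history -> history -> Prop) m n x y z :
  pow R m x y -> pow R n y z -> pow R (m + n) x z.
Proof.
elim: m x => [|m IH] x /=; first by move=> ->.
by move=> [w [Rxw Hw]] Hyz; exists w; split=> //; apply: IH Hw Hyz.
Qed.

Lemma sub_pow (R S : history -> history -> Prop) n x y :
  (forall x y, R x y -> S x y) -> pow R n x y -> pow S n x y.
Proof.
move=> RS; elim: n x => [|n IH] x //=.
by move=> [w [Rxw Hw]]; exists w; split; [apply: RS|apply: IH].
Qed.

Lemma star_split (R R1 R2 : history -> history -> Prop) :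
  (forall x y, R x y <-> R1 x y \/ R2 x y) -> forall x y,
  (exists i, pow R i x y) <->
  (exists i, pow R1 i x y) \/
  exists w v, (exists i, pow R1 i x w) /\ R2 w v /\ exists i, pow R i v y.
Proof.
move=> RE x y; split.
- move=> [i]; elim: i x => [|i IHi] x /=; first by move->; left; exists 0.
  move=> [h [/RE [R1xh|R2xh] Hh]]; last by right; exists x, h; split; [exists 0|eauto].
  case: (IHi _ Hh) => [[j Hj]|[w [v [[j Hj] Hwv]]]].
  + by left; exists j.+1, h.
  + by right; exists w, v; split=> //; exists j.+1, h.
- have R1R a b : R1 a b -> R a b by move=> ?; apply/RE; left.
  case=> [[i Hi]|[w [v [[j Hj] [R2wv [i Hi]]]]]].
  + by exists i; apply: sub_pow Hi.
  + exists (j + i.+1); apply: pow_add (sub_pow R1R Hj) _.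
    by exists v; split=> //; apply/RE; right.
Qed.

Lemma sem_frame (p : prog) x y : sem p x y ->
  exists u, y.2 = u ++ x.2 /\ forall t, sem p (x.1, t) (y.1, u ++ t).
Proof.
elim: p x y => [a|f n|q IHq r IHr|q IHq r IHr|q IHq|l] x y /=.
- move/tsemE=> [-> Ha]; exists [::]; split=> // t; exact/tsemE.
- by move=> ->; exists [::].
- by case=> [/IHq|/IHr] [u [Hu Ht]]; exists u; split=> // t; [left|right].
- move=> [w [/IHq [u1 [H1 T1]] /IHr [u2 [H2 T2]]]].
  exists (u2 ++ u1); split; first by rewrite H2 H1 catA.
  by move=> t; exists (w.1, u1 ++ t); split; [exact: T1|rewrite -catA; exact: T2].
- move=> [i Hi]; elim: i x Hi => [|i IHi] x /=.
  + by move=> ->; exists [::]; split=> // t; exists 0.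
  + move=> [w [/IHq [u1 [H1 T1]] /IHi [u2 [H2 T2]]]].
    exists (u2 ++ u1); split; first by rewrite H2 H1 catA.
    move=> t; have [j Hj] := T2 (u1 ++ t).
    by exists j.+1, (w.1, u1 ++ t); split; [exact: T1|rewrite -catA].
- by move=> ->; exists [:: x.1].
Qed.

Lemma sem_labels_nil_tail (p : prog) x y :
  labels p = [::] -> sem p x y -> y.2 = x.2.
Proof.
elim: p x y => [a|f n|q IHq r IHr|q IHq r IHr|q IHq|l] x y //=.
- by move=> _ /tsemE [->].
- by move=> _ ->.
- by move/nilP; rewrite cat_nilp => /andP[/nilP/IHq Hq /nilP/IHr Hr] [/Hq|/Hr].
- move/nilP; rewrite cat_nilp => /andP[/nilP/IHq Hq /nilP/IHr Hr].
  by move=> [w [/Hq <- /Hr]].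
- move=> Hl [i]; elim: i x => [|i IHi] x /=; first by move->.
  by move=> [w [/(IHq _ _ Hl) <- /IHi]].
Qed.

Lemma labels_E (p : prog) : labels (E p) = [::].
Proof. by elim: p => //= [q -> r ->|q -> r ->]. Qed.

Lemma inT_cat (x : prog * nat * prog) s1 s2 :
  inT x (s1 ++ s2) <-> inT x s1 \/ inT x s2.
Proof.
elim: s1 => [|y s IH] /=; first by split=> [|[[]|]]; [right|].
rewrite IH; tauto.
Qed.

Lemma inT_map (f : prog * nat * prog -> prog * nat * prog) x s :
  inT x (map f s) <-> exists y, inT y s /\ x = f y.
Proof.
elim: s => [|y s IH] /=; first by split=> [|[y []]].
rewrite IH; split.
- by case=> [<-|[z [Hz ->]]]; [exists y; split; [left|]|exists z; split; [right|]].
- by move=> [z [[<-|Hz] ->]]; [left|right; exists z].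
Qed.

Lemma labels_D (q : prog) d l k : inT (d, l, k) (D q) -> labels d = [::].
Proof.
elim: q d l k => [a|f n|q IHq r IHr|q IHq r IHr|q IHq|l0] d l k //=.
- by case/inT_cat=> [/IHq|/IHr].
- case/inT_cat=> /inT_map [[[d0 l0] k0] [Hi [-> _ _]]] /=; first exact: IHq Hi.
  by rewrite labels_E (IHr _ _ _ Hi).
- by move/inT_map=> [[[d0 l0] k0] [Hi [-> _ _]]] /=; rewrite labels_E (IHq _ _ _ Hi).
- by case=> [[<- _ _]|[]].
Qed.

Definition Dsem (q : prog) (x y : history) : Prop :=
  exists d l k z, inT (d, l, k) (D q) /\ sem d x z /\ sem k (z.1, z.1 :: z.2) y.

Lemma Dsem_plus (q r : prog) x y :
  Dsem (PPlus q r) x y <-> Dsem q x y \/ Dsem r x y.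
Proof.
split=> [[d [l [k [z [/inT_cat [Hi|Hi] H]]]]]|[]]; first by left; exists d, l, k, z.
  by right; exists d, l, k, z.
all: move=> [d [l [k [z [Hi H]]]]]; exists d, l, k, z.
all: by split=> //; apply/inT_cat; auto.
Qed.

Lemma Dsem_seq (q r : prog) x y :
  Dsem (PSeq q r) x y <->
  (exists w, Dsem q x w /\ sem r w y) \/ (exists w, sem (E q) x w /\ Dsem r w y).
Proof.
split.
- move=> [d [l [k [z [/inT_cat [] /inT_map [[[d0 l0] k0] [Hi [-> _ ->]]] [Hd Hk]]]]]] /=.
  + by move: Hk => [w [Hk Hr]]; left; exists w; split=> //; exists d0, l0, k0, z.
  + by move: Hd => [w [Hq Hd]]; right; exists w; split=> //; exists d0, l0, k0, z.
- case=> [[w [[d [l [k [z [Hi [Hd Hk]]]]]] Hr]]|[w [Hq [d [l [k [z [Hi [Hd Hk]]]]]]]]].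
  + exists d, l, (PSeq k r), z; split; last by split=> //; exists w.
    by apply/inT_cat; left; apply/inT_map; exists (d, l, k).
  + exists (PSeq (E q) d), l, k, z; split; last by split=> //; exists w.
    by apply/inT_cat; right; apply/inT_map; exists (d, l, k).
Qed.

Lemma Dsem_star (q : prog) x y :
  Dsem (PStar q) x y <->
  exists w v, sem (PStar (E q)) x w /\ Dsem q w v /\ sem (PStar q) v y.
Proof.
split.
- move=> [d [l [k [z [/inT_map [[[d0 l0] k0] [Hi [-> _ ->]]] [Hd Hk]]]]]] /=.
  move: Hd Hk => [w [Hw Hd]] [v [Hk Hv]].
  by exists w, v; split=> //; split=> //; exists d0, l0, k0, z.
- move=> [w [v [Hw [[d [l [k [z [Hi [Hd Hk]]]]]] Hv]]]].
  exists (PSeq (PStar (E q)) d), l, (PSeq k (PStar q)), z; split.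
    by apply/inT_map; exists (d, l, k).
  by split; [exists w|exists v].
Qed.

Lemma sem_ED (q : prog) x y : sem q x y <-> sem (E q) x y \/ Dsem q x y.
Proof.
have Dsem_nil (r : prog) x' y' : D r = [::] -> ~ Dsem r x' y'.
  by move=> Dr [d [l [k [z []]]]]; rewrite Dr.
elim: q x y => [a|f n|q IHq r IHr|q IHq r IHr|q IHq|l] x y.
- by have := @Dsem_nil (PTest a) x y erefl; tauto.
- by have := @Dsem_nil (PAssign f n) x y erefl; tauto.
- by rewrite /= IHq IHr Dsem_plus; tauto.
- rewrite /= Dsem_seq; split.
  + move=> [w [/IHq [Hq|Hq] Hr]]; last by right; left; exists w.
    by case/IHr: Hr => Hr; [left|right; right]; exists w.
  + case=> [|[]] [w [Hq Hr]]; exists w.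
    * by split; [apply/IHq|apply/IHr]; left.
    * by split=> //; apply/IHq; right.
    * by split; [apply/IHq; left|apply/IHr; right].
- by rewrite /= (star_split IHq) Dsem_star.
- split=> [->|[[]|[d [l' [k [z [[[<- _ <-]|[]] [/= -> ->]]]]]]]]; last by case: x.
  by right; exists (PTest (TOne Fld)), l, (PTest (TOne Fld)), x; split; [left|].
Qed.

Lemma D_kont_closed (p : prog) d l k d' l' k' :
  inT (d, l, k) (D p) -> inT (d', l', k') (D k) -> exists d'', inT (d'', l', k') (D p).
Proof.
elim: p d l k d' l' k' => [a|f n|q IHq r IHr|q IHq r IHr|q IHq|l0] d l k d' l' k' //=.
- case/inT_cat=> [H1|H1] H2.
  + by have [d'' H] := IHq _ _ _ _ _ _ H1 H2; exists d''; apply/inT_cat; left.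
  + by have [d'' H] := IHr _ _ _ _ _ _ H1 H2; exists d''; apply/inT_cat; right.
- case/inT_cat=> /inT_map [[[d0 l0] k0] [Hi [_ _ ->]]] /=.
  + case/inT_cat=> /inT_map [[[d1 l1] k1] [Hi1 [_ -> ->]]] /=.
    * have [d'' H] := IHq _ _ _ _ _ _ Hi Hi1; exists d''.
      by apply/inT_cat; left; apply/inT_map; exists (d'', l1, k1).
    * exists (PSeq (E q) d1).
      by apply/inT_cat; right; apply/inT_map; exists (d1, l1, k1).
  + move=> H2; have [d'' H] := IHr _ _ _ _ _ _ Hi H2; exists (PSeq (E q) d'').
    by apply/inT_cat; right; apply/inT_map; exists (d'', l', k').
- move/inT_map=> [[[d0 l0] k0] [Hi [_ _ ->]]] /=.
  case/inT_cat=> /inT_map [[[d1 l1] k1] [Hi1 [_ -> ->]]] /=; last by exists d1.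
  have [d'' H] := IHq _ _ _ _ _ _ Hi Hi1; exists (PSeq (PStar (E q)) d'').
  by apply/inT_map; exists (d'', l1, k1).
- by case=> [[_ _ <-]|[]].
Qed.

Lemma map_label_D (p : prog) : [seq t.1.2 | t <- D p] = labels p.
Proof.
elim: p => //= [q IHq r IHr|q IHq r IHr|q IHq].
- by rewrite map_cat IHq IHr.
- by rewrite map_cat -!map_comp -IHq -IHr; congr (_ ++ _); apply: eq_map => -[[]].
- by rewrite -map_comp -IHq; apply: eq_map => -[[]].
Qed.

Lemma inT_label (x : prog * nat * prog) s :
  inT x s -> x.1.2 \in [seq t.1.2 | t <- s].
Proof.
elim: s => [|y s IH] //= [<-|/IH]; first by rewrite mem_head.
by rewrite in_cons => ->; rewrite orbT.
Qed.

Lemma filter_label_notin l (s : seq (prog * nat * prog)) :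
  l \notin [seq t.1.2 | t <- s] -> [seq t <- s | t.1.2 == l] = [::].
Proof.
elim: s => [|y s IH] //=; rewrite in_cons negb_or => /andP [y_neq l_notin].
by rewrite eq_sym (negPf y_neq) IH.
Qed.

Lemma filter_label_uniq d l k (s : seq (prog * nat * prog)) :
  uniq [seq t.1.2 | t <- s] -> inT (d, l, k) s ->
  [seq t.2 | t <- s & t.1.2 == l] = [:: k].
Proof.
elim: s => [|[[d0 l0] k0] s IH] //= /andP [l0_notin s_uniq] [[_ <- <-]|Hi] /=.
  by rewrite eqxx filter_label_notin.
have /negPf -> : l0 != l by apply: contraNneq l0_notin => ->; exact: inT_label Hi.
exact: IH.
Qed.

Lemma filter_label_cons l k ks (s : seq (prog * nat * prog)) :
  [seq t.2 | t <- s & t.1.2 == l] = k :: ks -> exists d, inT (d, l, k) s.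
Proof.
elim: s => [|[[d0 l0] k0] s IH] //=.
case: eqP => [-> [<- _]|_ /IH [d H]]; first by exists d0; left.
by exists d; right.
Qed.

Lemma kont_cases (p : prog) l :
  kont p l = p \/ exists d, inT (d, l, kont p l) (D p).
Proof.
rewrite /kont; case: (l == 0); first by left.
case Ek: [seq _ | _ <- _ & _] => [|k ks]; first by left.
by right; apply: filter_label_cons Ek.
Qed.

Lemma kont_D (p : prog) d l k : well_labelled p ->
  inT (d, l, k) (D p) -> kont p l = k /\ l \in labels p.
Proof.
move=> /andP [labels_uniq /allP labels_pos] Hi.
have l_in : l \in labels p by rewrite -map_label_D; exact: (inT_label Hi).
split=> //; rewrite /kont.
have /negPf -> : l != 0 by rewrite -lt0n labels_pos.
by rewrite (filter_label_uniq _ Hi) // map_label_D.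
Qed.

Lemma kont_D_kont (p : prog) s d l k : well_labelled p ->
  inT (d, l, k) (D (kont p s)) -> kont p l = k /\ l \in labels p.
Proof.
move=> p_wl Hi; case: (kont_cases p s) => [Es|[d0 H0]].
  by rewrite Es in Hi; exact: kont_D p_wl Hi.
by have [d'' H] := D_kont_closed H0 Hi; exact: kont_D p_wl H.
Qed.

Lemma sem_nil_tail_E (q : prog) pk pk' :
  sem q (pk, [::]) (pk', [::]) <-> sem (E q) (pk, [::]) (pk', [::]).
Proof.
rewrite sem_ED; split=> [[//|[d [l [k [z [Hi [Hd Hk]]]]]]]|]; last by left.
have [u [/= Hu _]] := sem_frame Hk.
by move: Hu; rewrite (sem_labels_nil_tail (labels_D Hi) Hd) /=; case: u.
Qed.

Lemma sem_dup_step (q : prog) pk pk1 pk' u :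
  sem q (pk, [::]) (pk', rcons u pk1) <->
  exists d l k, inT (d, l, k) (D q) /\
    sem d (pk, [::]) (pk1, [::]) /\ sem k (pk1, [::]) (pk', u).
Proof.
rewrite sem_ED; split.
- case=> [/(sem_labels_nil_tail (labels_E q)) /=|]; first by case: u.
  move=> [d [l [k [[z1 z2] [Hi [Hd Hk]]]]]]; exists d, l, k; split=> //.
  have /= z2_nil := sem_labels_nil_tail (labels_D Hi) Hd; subst z2.
  have [u' [/= Hu Ht]] := sem_frame Hk.
  move: Hu; rewrite cats1 => /rcons_inj [-> ->].
  by split=> //; have := Ht [::]; rewrite cats0.
- move=> [d [l [k [Hi [Hd Hk]]]]]; right; exists d, l, k, (pk1, [::]).
  have [u' [/= Hu Ht]] := sem_frame Hk.
  rewrite cats0 in Hu; subst u'.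
  by do 2!split=> //; rewrite -cats1; exact: Ht.
Qed.

Lemma accept_kont (p : prog) :
  well_labelled p -> forall pks (s : pa_state p) pkin pkout,
  sem (kont p (ssval s)) (pkin, [::]) (pkout, rev pks) <->
  accept (A := prog_automaton p) s pkin pks pkout.
Proof.
move=> p_wl; elim=> [|pk1 pks IH] s pkin pkout; first exact: sem_nil_tail_E.
rewrite rev_cons sem_dup_step; split.
- move=> [d [l [k [Hi [Hd Hk]]]]]; have [kont_l l_in] := kont_D_kont p_wl Hi.
  have l_state : l \in 0 :: labels p by rewrite in_cons l_in orbT.
  exists (SeqSub l_state); split; first by exists d, k.
  by apply/IH; rewrite /= kont_l.
- move=> [s' [[d [k [Hi Hd]]] /IH]]; have [kont_s' _] := kont_D_kont p_wl Hi.
  by rewrite kont_s' => Hk; exists d, (ssval s'), k.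
Qed.
End ProgramAutomaton.

Theorem theorem2 (Fld : finType) (p : prog Fld) :
  well_labelled p ->
  forall (pkin : packet Fld) (pks : seq (packet Fld)) (pkout : packet Fld),
    sem p (pkin, [::]) (pkout, rev pks) <->
    accept (nka_s0 (prog_automaton p)) pkin pks pkout.
Proof. by move=> p_wl pkin pks pkout; exact: (accept_kont p_wl pks (pa_s0 p)). Qed.
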